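(* Let $g:[0,1]\to\mathbb R$ be continuous and concave. Then the limit $$\Gamma_g=\lim_{n\to\infty}\frac1n\log\mathbb{E}\Big(e^{n g(H_n/n)}\Big)$$ exists (as a real number).
   Context: Standing setup (discrete-time Hawkes process, DTHP). Let $(a_i)_{i=0}^\infty$ be a sequence of strictly positive real numbers with $\sum_{i=0}^\infty a_i<1$ and $\sum_{i=1}^\infty i\,a_i<\infty$. The arrival process $\{\xi_n\}_{n\ge1}$ is a sequence of $\{0,1\}$-valued random variables on a probability space $(\Omega,\mathcal F,\mathbb P)$ with $\mathbb{P}(\xi_1=1)=a_0$, $\mathbb P(\xi_1=0)=1-a_0$, and for $n\ge2$, $$\mathbb{P}(\xi_n=1\mid \xi_1,\dots,\xi_{n-1})=a_0+\sum_{i=1}^{n-1}a_{n-i}\xi_i,\qquad \mathbb{P}(\xi_n=0\mid \xi_1,\dots,\xi_{n-1})=1-\Big(a_0+\sum_{i=1}^{n-1}a_{n-i}\xi_i\Big).$$ The DTHP is $H_n=\sum_{i=1}^n\xi_i$, and $\mathcal F_n=\sigma(\xi_1,\dots,\xi_n)$. *)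

From HB Require Import structures.
From mathcomp Require Import all_boot all_order all_algebra.
From mathcomp Require Import all_classical all_reals all_analysis.
Set Implicit Arguments. Unset Strict Implicit. Unset Printing Implicit Defensive.
Import Order.TTheory GRing.Theory Num.Theory numFieldNormedType.Exports.
Local Open Scope ring_scope.
Local Open Scope classical_set_scope.

Definition dthp_kernel {R : realType} (a : R^nat) : Prop :=
  (forall i, 0 < a i) /\
  cvgn (series a) /\ limn (series a) < 1 /\
  cvgn (series (fun i => i%:R * a i)).

(* Conditional probability P(xi_{j+1} = 1 | xi_1, ..., xi_j), where the
   (0-based) coordinate x i stands for xi_{i+1}:
   a_0 + sum_{i=1}^{j} a_{j+1-i} xi_i. *)
Definition dthp_rate {R : realType} (a : R^nat) (n : nat)
  (x : {ffun 'I_n -> bool}) (j : 'I_n) : R :=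
  a 0%N + \sum_(i < n | (i < j)%N) a (j - i)%N * (x i)%:R.

Definition dthp_pathprob {R : realType} (a : R^nat) (n : nat)
  (x : {ffun 'I_n -> bool}) : R :=
  \prod_(j < n) (if x j then dthp_rate a x j else 1 - dthp_rate a x j).

Definition dthp_H {R : realType} (n : nat) (x : {ffun 'I_n -> bool}) : R :=
  \sum_(j < n) (x j)%:R.

Definition dthp_expect {R : realType} (a : R^nat) (g : R -> R) (n : nat) : R :=
  \sum_(x : {ffun 'I_n -> bool})
     dthp_pathprob a x * expR (n%:R * g (dthp_H x / n%:R)).

Definition concave_on01 {R : realType} (g : R -> R) : Prop :=
  forall x y t : R, 0 <= x <= 1 -> 0 <= y <= 1 -> 0 <= t <= 1 ->
    t * g x + (1 - t) * g y <= g (t * x + (1 - t) * y).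

From HB Require Import structures.
From mathcomp Require Import all_boot all_order all_algebra.
From mathcomp Require Import all_classical all_reals all_analysis.
From mathcomp Require Import lra ring zify.
Set Implicit Arguments. Unset Strict Implicit. Unset Printing Implicit Defensive.
Import Order.TTheory GRing.Theory Num.Theory numFieldNormedType.Exports.
Local Open Scope ring_scope.
Local Open Scope classical_set_scope.

(* Write s = sum_i a_i < 1 and M = sum_i i a_i.  Prefixing a path x of length n
   to a path y of length m raises the rate at time n + k by
   d_k = sum_(i < n) a_(n+k-i) x_i, and sum_k d_k <= M.  Since every rate stays
   below s, a step without arrival keeps at least the fraction e^(-d_k/(1-s)) of
   its probability and a step with an arrival loses nothing, so
   P(xy) >= e^(-M/(1-s)) P(x) P(y).  Concavity of g makes n g(h/n) superadditive
   in (n, h), hence log E(e^(n g(H_n/n))) is superadditive up to the constant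
   M/(1-s); it is also at most n (max g + 1), and Fekete's lemma gives the
   limit. *)

Section Fekete.
Variables (R : realType) (w : nat -> R).
Hypothesis w_superadd : forall n m, w n + w m <= w (n + m)%N.

Lemma superadditive_divn_ge q k r : q%:R * w k + w r <= w (q * k + r)%N.
Proof.
elim: q => [|q IH]; first by rewrite mul0r add0r mul0n.
rewrite mulSn -addnA; apply: le_trans (w_superadd _ _).
rewrite -natr1 mulrDl mul1r; lra.
Qed.

Lemma superadditive_avg_ge k n : (0 < k)%N -> (0 < n)%N ->
  k%:R^-1 * w k - n%:R^-1 * (`|w k| + \sum_(r < k) `|w r|) <= n%:R^-1 * w n.
Proof.
move=> k0 n0; set A := \sum_(r < k) _.
have kR0 : 0 < k%:R :> R by rewrite ltr0n.
have nR0 : 0 < n%:R :> R by rewrite ltr0n.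
pose q := (n %/ k)%N; pose r := (n %% k)%N.
have nE : n = (q * k + r)%N by apply: divn_eq.
have rk : (r < k)%N by rewrite ltn_pmod.
have wr_ge : - A <= w r.
  have : `|w r| <= A.
    by rewrite /A (bigD1 (Ordinal rk)) //= lerDl sumr_ge0.
  have := ler_norm (- w r); rewrite normrN; lra.
have wn_ge : q%:R * w k - A <= w n.
  by rewrite [X in _ <= w X]nE; have := superadditive_divn_ge q k r; lra.
have rwk_le : r%:R / k%:R * w k <= `|w k|.
  apply: le_trans (_ : r%:R / k%:R * `|w k| <= _).
    by rewrite ler_wpM2l ?divr_ge0 ?ler_norm.
  by rewrite ler_piMl // ler_pdivrMr // mul1r ler_nat ltnW.
have qE : n%:R * k%:R^-1 = q%:R + r%:R / k%:R :> R.
  by rewrite {1}nE natrD natrM mulrDl mulfK // gt_eqF.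
rewrite -(ler_pM2l nR0) mulrBr !mulrA mulfV ?gt_eqF // !mul1r qE mulrDl.
lra.
Qed.

Lemma fekete_superadditive B : (forall n, w n <= n%:R * B) ->
  (fun n => n%:R^-1 * w n) @ \oo -->
    sup [set x | exists2 n, (0 < n)%N & x = n%:R^-1 * w n].
Proof.
move=> w_le; set S := [set x | _].
have hS : has_sup S.
  split; first by exists (1%:R^-1 * w 1%N); exists 1%N.
  exists B => _ [n n0 ->].
  by rewrite ler_pdivrMl ?ltr0n.
apply/cvgrPdist_le => e e0.
have e20 : 0 < e / 2 by rewrite divr_gt0.
have [_ [k k0 ->] k_close] := sup_adherent e20 hS.
set C := `|w k| + \sum_(r < k) `|w r|.
near=> n.
have n0 : (0 < n)%N by near: n; exact: nbhs_infty_gt.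
have nR0 : 0 < n%:R :> R by rewrite ltr0n.
have C_le : n%:R^-1 * C <= e / 2.
  have : C / (e / 2) <= n%:R by near: n; exact: nbhs_infty_ger.
  by rewrite ler_pdivrMr // -ler_pdivrMl // mulrC.
have upper : n%:R^-1 * w n <= sup S by apply: sup_upper_bound => //; exists n.
have lower := superadditive_avg_ge k0 n0; rewrite -/C in lower.
rewrite ler_distl; apply/andP; split; lra.
Unshelve. all: by end_near. Qed.

End Fekete.

Lemma fekete_almost_superadditive (R : realType) (u : nat -> R) (K B : R) : 0 <= K ->
  (forall n m, u n + u m - K <= u (n + m)%N) -> (forall n, u n <= n%:R * B) ->
  exists L : R, (fun n : nat => n%:R^-1 * u n) @ \oo --> L.
Proof.
move=> K0 u_superadd u_le; pose w n := u n - K.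
have w_superadd n m : w n + w m <= w (n + m)%N by have := u_superadd n m; rewrite /w; lra.
have w_le n : w n <= n%:R * B by have := u_le n; rewrite /w; lra.
have inv_cvg0 : (fun n : nat => n%:R^-1 : R) @ \oo --> 0.
  by rewrite -cvg_shiftS; exact: cvg_harmonic.
have -> : (fun n : nat => n%:R^-1 * u n) = (fun n => n%:R^-1 * w n + K * n%:R^-1).
  by apply/funext => n; rewrite /w; ring.
eexists; exact: cvgD (fekete_superadditive w_superadd w_le) (cvgMr inv_cvg0).
Qed.

Lemma perspective_superadditive (R : realType) (g : R -> R) (n m : nat) (X Y : R) :
  concave_on01 g -> 0 <= X <= n%:R -> 0 <= Y <= m%:R ->
  n%:R * g (X / n%:R) + m%:R * g (Y / m%:R) <=
  (n + m)%:R * g ((X + Y) / (n + m)%:R).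
Proof.
move=> g_conc /andP[X0 Xn] /andP[Y0 Ym].
case: n Xn => [|n] Xn.
  have -> : X = 0 by apply/eqP; rewrite eq_le X0 Xn.
  by rewrite mul0r !add0r add0n.
case: m Ym => [|m] Ym.
  have -> : Y = 0 by apply/eqP; rewrite eq_le Y0 Ym.
  by rewrite mul0r !addr0 addn0.
rewrite natrD; set N := n.+1%:R; set M := m.+1%:R.
have N0 : 0 < N by rewrite ltr0n.
have M0 : 0 < M by rewrite ltr0n.
have NM0 : 0 < N + M by rewrite addr_gt0.
have frac01 (Z W : R) : 0 < W -> 0 <= Z <= W -> 0 <= Z / W <= 1.
  move=> W0 /andP[Z0 ZW]; apply/andP; split; first by rewrite divr_ge0 // ltW.
  by rewrite ler_pdivrMr // mul1r.
have XN01 := frac01 _ _ N0 (introT andP (conj X0 Xn)).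
have YM01 := frac01 _ _ M0 (introT andP (conj Y0 Ym)).
have t01 : 0 <= N / (N + M) <= 1 by rewrite frac01 // ltW // lerDl ltW.
have := g_conc _ _ _ XN01 YM01 t01.
have -> : 1 - N / (N + M) = M / (N + M) by field; rewrite gt_eqF.
have -> : N / (N + M) * (X / N) + M / (N + M) * (Y / M) = (X + Y) / (N + M).
  by field; rewrite !gt_eqF.
have NM_cancel (Z : R) : (N + M) * Z / (N + M) = Z by rewrite mulrAC mulfV ?gt_eqF ?mul1r.
by rewrite -(ler_pM2l NM0) mulrDr !mulrA !NM_cancel.
Qed.

Lemma expRN_mul_compl_le (R : realType) (r d s : R) :
  0 <= r -> 0 <= d -> r + d <= s -> s < 1 ->
  expR (- (d / (1 - s))) * (1 - r) <= 1 - (r + d).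
Proof.
move=> r0 d0 rds s1.
have rd1 : 0 < 1 - (r + d) by lra.
set x := d / (1 - (r + d)).
have expR_le : expR (- (d / (1 - s))) <= expR (- x).
  by rewrite ler_expR lerN2 ler_wpM2l // lef_pV2 ?posrE; lra.
have rE : 1 - r = (1 + x) * (1 - (r + d)).
  by rewrite /x mulrDl mul1r mulfVK ?gt_eqF //; lra.
have expRN_mul_le1 : expR (- x) * (1 + x) <= 1.
  by rewrite expRN mulrC ler_pdivrMr ?expR_gt0 // mul1r expR_ge1Dx.
rewrite rE mulrA -[leRHS]mul1r ler_wpM2r ?(ltW rd1) //.
apply: le_trans expRN_mul_le1.
by rewrite ler_wpM2r // addr_ge0 ?divr_ge0 // ltW.
Qed.

Section KernelSums.
Variables (R : realType) (a : R^nat).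
Hypothesis a_ge0 : forall i, 0 <= a i.

Lemma series_le_limn n : cvgn (series a) -> series a n <= limn (series a).
Proof.
move=> a_cvg; apply: nondecreasing_cvgn_le => //.
exact: nondecreasing_series.
Qed.

Lemma sum_kernel_tails_le m n :
  \sum_(0 <= k < m) \sum_(0 <= t < n) a (k + t.+1)%N <=
  \sum_(0 <= l < n + m) l%:R * a l.
Proof.
elim: m a a_ge0 n => [|m IH] b b_ge0 n.
  by rewrite big_geq // sumr_ge0 // => i _; rewrite mulr_ge0.
rewrite big_nat_recl // addnS big_nat_recl // mul0r add0r.
under [leRHS]eq_bigr do rewrite -natr1 mulrDl mul1r.
rewrite big_split /= addrC lerD ?(IH (fun i => b i.+1)) //.
under eq_bigr do rewrite add0n.
by rewrite [leRHS](big_cat_nat _ (leq_addr m n)) //= lerDl sumr_ge0.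
Qed.

Lemma kernel_prefix_le_series N j :
  a 0%N + \sum_(i < N | (i < j)%N) a (j - i)%N <= series a j.+1.
Proof.
rewrite /series /= big_nat_recl // lerD2l.
rewrite -(big_mkord (fun i => (i < j)%N) (fun i => a (j - i)%N)).
apply: le_trans (_ : \sum_(0 <= i < N + j | (i < j)%N) a (j - i)%N <= _).
  rewrite (big_nat_widen 0 N (N + j)) ?leq_addr //.
  rewrite big_mkcond [leRHS]big_mkcond /=; apply: ler_sum_nat => i _.
  by case: (i < j)%N; case: (i < N)%N.
rewrite -(big_nat_widen 0 j (N + j) xpredT) ?leq_addl //.
rewrite big_nat_rev /= add0n.
by apply: ler_sum_nat => i /andP[_ ij]; rewrite subKn.
Qed.

End KernelSums.

Section Concat.
Variable T : Type.

Definition fconcat n m (x : {ffun 'I_n -> T}) (y : {ffun 'I_m -> T}) :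
  {ffun 'I_(n + m) -> T} :=
  [ffun i => match fintype.split i with inl j => x j | inr k => y k end].

Variables (n m : nat) (x : {ffun 'I_n -> T}) (y : {ffun 'I_m -> T}).

Lemma fconcat_lshift i : fconcat x y (lshift m i) = x i.
Proof. by rewrite ffunE (unsplitK (inl _ i)). Qed.

Lemma fconcat_rshift k : fconcat x y (rshift n k) = y k.
Proof. by rewrite ffunE (unsplitK (inr _ k)). Qed.

End Concat.

Lemma sum_ffun_fconcat (T : finType) (V : nmodType) n m
    (F : {ffun 'I_(n + m) -> T} -> V) :
  \sum_(z : {ffun 'I_(n + m) -> T}) F z =
  \sum_(x : {ffun 'I_n -> T}) \sum_(y : {ffun 'I_m -> T}) F (fconcat x y).
Proof.
rewrite pair_bigA /= (reindex (fun p => fconcat p.1 p.2)) //.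
exists (fun z : {ffun 'I_(n + m) -> T} =>
  ([ffun i => z (lshift m i)], [ffun k => z (rshift n k)])).
  by move=> [x y] _; congr (_, _); apply/ffunP => i;
     rewrite ffunE ?fconcat_lshift ?fconcat_rshift.
move=> z _; apply/ffunP => i; rewrite ffunE.
by case: (fintype.split i) (splitK i) => [j|k] /= <-; rewrite ffunE.
Qed.

Definition dthp_step {R : realType} (a : R^nat) {n} (x : {ffun 'I_n -> bool})
    (j : 'I_n) : R :=
  if x j then dthp_rate a x j else 1 - dthp_rate a x j.

Section DTHP.
Variables (R : realType) (a : R^nat).

Hypothesis a_gt0 : forall i, 0 < a i.
Hypothesis a_cvg : cvgn (series a).
Hypothesis a_lim_lt1 : limn (series a) < 1.
Hypothesis ia_cvg : cvgn (series (fun i => i%:R * a i)).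

Let s := limn (series a).
Let M := limn (series (fun i => i%:R * a i)).
Let a_ge0 i : 0 <= a i := ltW (a_gt0 i).
Let ia_ge0 i : 0 <= i%:R * a i := mulr_ge0 (ler0n R i) (a_ge0 i).


Lemma dthp_pathprobE n (x : {ffun 'I_n -> bool}) :
  dthp_pathprob a x = \prod_(j < n) dthp_step a x j.
Proof. by []. Qed.

Lemma dthp_H_bounds n (x : {ffun 'I_n -> bool}) : 0 <= (dthp_H x : R) <= n%:R.
Proof.
rewrite sumr_ge0 //= -[n in n%:R]card_ord -sumr_const.
by apply: ler_sum => j _; case: (x j).
Qed.

Lemma dthp_rate_gt0 n (x : {ffun 'I_n -> bool}) j : 0 < dthp_rate a x j.
Proof.
by rewrite (lt_le_trans (a_gt0 0)) // lerDl sumr_ge0 // => i _; rewrite mulr_ge0.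
Qed.

Lemma dthp_rate_le_lim n (x : {ffun 'I_n -> bool}) j : dthp_rate a x j <= s.
Proof.
apply: le_trans (series_le_limn a_ge0 _ a_cvg).
apply: le_trans (kernel_prefix_le_series a_ge0 n j).
by rewrite lerD2l ler_sum // => i _; case: (x i); rewrite ?mulr1 ?mulr0.
Qed.

Lemma dthp_rate_lt1 n (x : {ffun 'I_n -> bool}) j : dthp_rate a x j < 1.
Proof. exact: le_lt_trans (dthp_rate_le_lim x j) a_lim_lt1. Qed.

Lemma dthp_step_gt0 n (x : {ffun 'I_n -> bool}) j : 0 < dthp_step a x j.
Proof.
have r_gt0 := dthp_rate_gt0 x j; have r_lt1 := dthp_rate_lt1 x j.
by rewrite /dthp_step; case: (x j); lra.
Qed.

Lemma dthp_step_le1 n (x : {ffun 'I_n -> bool}) j : dthp_step a x j <= 1.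
Proof.
have r_gt0 := dthp_rate_gt0 x j; have r_lt1 := dthp_rate_lt1 x j.
by rewrite /dthp_step; case: (x j); lra.
Qed.

Lemma dthp_pathprob_gt0 n (x : {ffun 'I_n -> bool}) : 0 < dthp_pathprob a x.
Proof. by rewrite dthp_pathprobE prodr_gt0 // => j _; exact: dthp_step_gt0. Qed.

Lemma dthp_pathprob_le1 n (x : {ffun 'I_n -> bool}) : dthp_pathprob a x <= 1.
Proof.
rewrite dthp_pathprobE prodr_ile1 // => j _.
by rewrite ltW ?dthp_step_gt0 ?dthp_step_le1.
Qed.

Lemma dthp_rate_shift_total_le n m (x : {ffun 'I_n -> bool}) :
  \sum_(k < m) \sum_(i < n) a (n + k - i)%N * (x i)%:R <= M.
Proof.
apply: le_trans (series_le_limn ia_ge0 (n + m) ia_cvg).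
apply: le_trans (sum_kernel_tails_le a_ge0 m n).
rewrite -(big_mkord xpredT (fun k => \sum_(i < n) a (n + k - i)%N * (x i)%:R)).
apply: ler_sum_nat => k _.
apply: le_trans (_ : \sum_(i < n) a (n + k - i)%N <= _).
  by apply: ler_sum => i _; case: (x i); rewrite ?mulr1 ?mulr0.
rewrite -(big_mkord xpredT (fun i => a (n + k - i)%N)) big_nat_rev /= add0n.
apply: ler_sum_nat => i /andP[_ lt_in].
by rewrite (_ : (n + k - (n - i.+1))%N = (k + i.+1)%N) //; lia.
Qed.

Section Fconcat.
Variables (n m : nat) (x : {ffun 'I_n -> bool}) (y : {ffun 'I_m -> bool}).

Lemma dthp_rate_fconcat_lshift i :
  dthp_rate a (fconcat x y) (lshift m i) = dthp_rate a x i.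
Proof.
rewrite /dthp_rate big_split_ord /= [X in _ + (_ + X)]big_pred0 ?addr0.
  by congr (_ + _); apply: eq_bigr => i' _; rewrite fconcat_lshift.
by move=> k /=; apply/negbTE; rewrite -leqNgt (leq_trans (ltnW (ltn_ord i))) ?leq_addr.
Qed.

Lemma dthp_rate_fconcat_rshift k :
  dthp_rate a (fconcat x y) (rshift n k) =
  dthp_rate a y k + \sum_(i < n) a (n + k - i)%N * (x i)%:R.
Proof.
rewrite /dthp_rate big_split_ord /= addrC addrA; congr (_ + _).
  congr (_ + _); apply: eq_big => [k'|k' _] /=; first by rewrite ltn_add2l.
  by rewrite fconcat_rshift subnDl.
apply: eq_big => [i|i _] /=; last by rewrite fconcat_lshift.
exact: leq_trans (ltn_ord i) (leq_addr _ _).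
Qed.

Lemma dthp_H_fconcat : dthp_H (fconcat x y) = dthp_H x + dthp_H y :> R.
Proof.
rewrite /dthp_H big_split_ord; congr (_ + _); apply: eq_bigr => i _.
  by rewrite fconcat_lshift.
by rewrite fconcat_rshift.
Qed.

Lemma dthp_step_fconcat_lshift i :
  dthp_step a (fconcat x y) (lshift m i) = dthp_step a x i.
Proof. by rewrite /dthp_step fconcat_lshift dthp_rate_fconcat_lshift. Qed.

Lemma dthp_step_fconcat_rshift_ge (k : 'I_m) :
  expR (- ((\sum_(i < n) a (n + k - i)%N * (x i)%:R) / (1 - s))) *
    dthp_step a y k <=
  dthp_step a (fconcat x y) (rshift n k).
Proof.
have := dthp_rate_le_lim (fconcat x y) (rshift n k).
rewrite /dthp_step fconcat_rshift dthp_rate_fconcat_rshift.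
set d := \sum_(i < n) _ => rd_le.
have d_ge0 : 0 <= d by rewrite sumr_ge0 // => i _; rewrite mulr_ge0.
have r_gt0 := dthp_rate_gt0 y k.
case: (y k); last by rewrite expRN_mul_compl_le // ltW.
apply: le_trans (_ : dthp_rate a y k <= _); last by rewrite lerDl.
rewrite ler_piMl ?(ltW r_gt0) // expR_le1 oppr_le0 divr_ge0 // subr_ge0.
exact: ltW a_lim_lt1.
Qed.

Lemma dthp_pathprob_fconcat_ge :
  dthp_pathprob a x * (expR (- (M / (1 - s))) * dthp_pathprob a y) <=
  dthp_pathprob a (fconcat x y).
Proof.
have step_ge0 l (z : {ffun 'I_l -> bool}) j : 0 <= dthp_step a z j.
  exact: ltW (dthp_step_gt0 z j).
rewrite !dthp_pathprobE big_split_ord /=.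
under [X in _ <= X * _]eq_bigr do rewrite dthp_step_fconcat_lshift.
apply: ler_wpM2l; first exact: prodr_ge0.
pose d (k : nat) := \sum_(i < n) a (n + k - i)%N * (x i)%:R.
apply: le_trans (_ : \prod_(k < m) (expR (- (d k / (1 - s))) * dthp_step a y k) <= _).
  rewrite big_split /=; apply: ler_wpM2r; first exact: prodr_ge0.
  rewrite -expR_sum ler_expR sumrN lerN2 -mulr_suml.
  apply: ler_wpM2r; first by rewrite invr_ge0 subr_ge0 ltW.
  exact: dthp_rate_shift_total_le.
apply: ler_prod => k _.
by rewrite mulr_ge0 ?expR_ge0 //= dthp_step_fconcat_rshift_ge.
Qed.

End Fconcat.

Lemma dthp_defect_ge0 : 0 <= M / (1 - s).
Proof.
rewrite divr_ge0 // ?subr_ge0 ?(ltW a_lim_lt1) //.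
by apply: le_trans (series_le_limn ia_ge0 0 ia_cvg); rewrite /series /= big_geq.
Qed.

Variable g : R -> R.

Lemma dthp_expect_gt0 n : 0 < dthp_expect a g n.
Proof.
rewrite /dthp_expect (bigD1 [ffun _ => false]) //=; apply: ltr_wpDr.
  by rewrite sumr_ge0 // => x _; rewrite mulr_ge0 ?expR_ge0 // ltW ?dthp_pathprob_gt0.
by rewrite mulr_gt0 ?expR_gt0 ?dthp_pathprob_gt0.
Qed.

Lemma ln_dthp_expect_le G : (forall t, 0 <= t <= 1 -> g t <= G) ->
  forall n, ln (dthp_expect a g n) <= n%:R * (G + 1).
Proof.
move=> g_le n; rewrite -ler_expR lnK ?posrE ?dthp_expect_gt0 //.
apply: le_trans (_ : \sum_(x : {ffun 'I_n -> bool}) expR (n%:R * G) <= _).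
  apply: ler_sum => x _; rewrite -[leRHS]mul1r ler_pM ?expR_ge0 ?dthp_pathprob_le1 //.
    exact: ltW (dthp_pathprob_gt0 x).
  rewrite ler_expR; apply: ler_wpM2l => //; apply: g_le.
  have /andP[H_ge0 H_le] := dthp_H_bounds x.
  case: n x H_ge0 H_le => [|n] x H_ge0 H_le; first by rewrite invr0 mulr0 lexx ler01.
  by rewrite divr_ge0 //= ler_pdivrMr ?ltr0n // mul1r.
rewrite sumr_const card_ffun card_bool card_ord -[leLHS]mulr_natr natrX.
rewrite mulrDr expRD ler_wpM2l ?expR_ge0 // mulr1.
rewrite -[X in expR X]mulr1 expRM_natl lerXn2r ?nnegrE ?expR_ge0 //.
exact: expR_ge1Dx 1.
Qed.

Hypothesis g_conc : concave_on01 g.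

Lemma dthp_expect_add_ge n m :
  expR (- (M / (1 - s))) * (dthp_expect a g n * dthp_expect a g m) <=
  dthp_expect a g (n + m).
Proof.
rewrite /dthp_expect sum_ffun_fconcat mulr_suml mulr_sumr; apply: ler_sum => x _.
rewrite !mulr_sumr; apply: ler_sum => y _.
rewrite dthp_H_fconcat.
set e := expR (- (M / (1 - s))).
rewrite (_ : e * _ = dthp_pathprob a x * (e * dthp_pathprob a y) *
    (expR (n%:R * g (dthp_H x / n%:R)) * expR (m%:R * g (dthp_H y / m%:R))));
  last by ring.
apply: ler_pM.
- by rewrite !mulr_ge0 ?expR_ge0 // ltW ?dthp_pathprob_gt0.
- by rewrite mulr_ge0 ?expR_ge0.
- exact: dthp_pathprob_fconcat_ge.
- by rewrite -expRD ler_expR perspective_superadditive ?dthp_H_bounds.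
Qed.

Lemma ln_dthp_expect_superadditive n m :
  ln (dthp_expect a g n) + ln (dthp_expect a g m) - M / (1 - s) <=
  ln (dthp_expect a g (n + m)).
Proof.
have E_gt0 k : 0 < dthp_expect a g k := dthp_expect_gt0 k.
have := dthp_expect_add_ge n m.
rewrite -ler_ln ?posrE ?mulr_gt0 ?expR_gt0 // !lnM ?posrE ?mulr_gt0 ?expR_gt0 //.
by rewrite expRK; lra.
Qed.

End DTHP.

Theorem lemma4p4 (R : realType) (a : R^nat) (g : R -> R) :
  dthp_kernel a ->
  {within `[0, 1], continuous g} ->
  concave_on01 g ->
  exists Gamma : R,
    (fun n : nat => n%:R^-1 * ln (dthp_expect a g n)) @ \oo --> Gamma.
Proof.
move=> [a_gt0 [a_cvg [a_lim_lt1 ia_cvg]]] g_cont g_conc.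
have [c _ g_max] := EVT_max (@ler01 R) g_cont.
have g_le t : 0 <= t <= 1 -> g t <= g c by move=> t01; apply: g_max; rewrite in_itv.
apply: fekete_almost_superadditive (dthp_defect_ge0 a_gt0 a_lim_lt1 ia_cvg) _ _.
- exact: ln_dthp_expect_superadditive.
- exact: ln_dthp_expect_le g_le.
Qed.
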